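(* Let $\mathbb{F}_q$ be a finite field with $q$ elements and let $I\subset\mathbb{F}_q[x_1,\ldots,x_n]$ be a zero-dimensional ideal with irredundant primary decomposition $I=I_1\cap\cdots\cap I_t$. For $i=1,\ldots,t$ let $J_i=I_1\cap\cdots\cap I_{i-1}\cap I_{i+1}\cap\cdots\cap I_t$. Let $\Psi_I:\mathbb{F}_q[\mathbf{x}]/I\to\mathbb{F}_q[\mathbf{x}]/I$ be the $\mathbb{F}_q$-linear map $\Psi_I(\bar f)=\bar f^{\,q}-\bar f$. Then there exist $h_1,\ldots,h_t$ with $h_i\in J_i\setminus I_i$ and $\bar h_i^{\,2}=\bar h_i$ for each $i$, such that $\mathrm{Ker}(\Psi_I)$ is a direct product of one-dimensional $\mathbb{F}_q$-algebras $$\mathrm{Ker}(\Psi_I)=\langle\bar h_1\rangle\oplus\cdots\oplus\langle\bar h_t\rangle.$$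
   Context: An ideal $I$ is zero-dimensional if $\mathbb{F}_q[\mathbf{x}]/I$ is a finite-dimensional $\mathbb{F}_q$-vector space. $\bar h$ denotes the class of $h$ in $\mathbb{F}_q[\mathbf{x}]/I$; $\langle\bar h_i\rangle$ denotes the one-dimensional $\mathbb{F}_q$-subspace $\mathbb{F}_q\bar h_i$, and the decomposition is an internal direct sum of these subalgebras inside $\mathbb{F}_q[\mathbf{x}]/I$. For $t=1$, $J_1=\mathbb{F}_q[\mathbf{x}]$. *)

From HB Require Import structures.
From mathcomp Require Import all_boot all_algebra all_field.
From mathcomp Require Import mpoly.
Set Implicit Arguments. Unset Strict Implicit. Unset Printing Implicit Defensive.
Import GRing.Theory.
Local Open Scope ring_scope.

Section Ideals.
Variable R : comRingType.

Definition is_ideal (I : R -> Prop) : Prop :=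
  [/\ I 0, (forall a b, I a -> I b -> I (a + b)) & (forall r a, I a -> I (r * a))].

Definition radical (I : R -> Prop) : R -> Prop := fun f => exists m : nat, I (f ^+ m).

Definition is_primary (Q : R -> Prop) : Prop :=
  [/\ is_ideal Q, ~ Q 1 &
      forall a b, Q (a * b) -> ~ Q a -> exists m : nat, Q (b ^+ m)].

Definition irredundant_primary_decomposition (t : nat) (I : R -> Prop)
    (Q : 'I_t -> R -> Prop) : Prop :=
  [/\ forall f, I f <-> (forall i, Q i f),
      forall i, is_primary (Q i),
      forall i j, i != j -> exists f, ~ (radical (Q i) f <-> radical (Q j) f)
    & forall i, ~ (forall f, (forall j, j != i -> Q j f) -> Q i f)].

(* intersection of all components except the i-th (whole ring when t = 1) *)
Definition Jcomp (t : nat) (Q : 'I_t -> R -> Prop) (i : 'I_t) : R -> Prop :=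
  fun f => forall j, j != i -> Q j f.
End Ideals.

(* I is zero-dimensional: R/I is a finite-dimensional F-vector space, i.e. the
   classes of finitely many elements span R/I over F. *)
Definition zero_dimensional (F : fieldType) (n : nat) (I : {mpoly F[n]} -> Prop) : Prop :=
  exists s : seq {mpoly F[n]}, forall f : {mpoly F[n]},
    exists c : 'I_(size s) -> F, I (f - \sum_(k < size s) c k *: s`_k).

From HB Require Import structures.
From mathcomp Require Import all_boot all_algebra all_field.
From mathcomp Require Import mpoly.
From Stdlib Require Import Classical.
Set Implicit Arguments. Unset Strict Implicit. Unset Printing Implicit Defensive.
Import GRing.Theory.
Local Open Scope ring_scope.

(* Since I is zero-dimensional, the powers of any f collide modulo I, so modulo
   a primary component Q_i every element is a unit or nilpotent. Hence
   components with distinct radicals are comaximal, and the Chinese remainder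
   theorem yields h_i = 1 mod Q_i and
   h_i = 0 mod Q_j (j <> i). Modulo Q_i, f^q - f = prod_(a in F_q) (f - a) and
   all but at most one factor are units, so a Frobenius-fixed f is congruent
   to a constant c_i modulo each Q_i, that is f = sum_i c_i h_i modulo I. *)

Section IdealArithmetic.
Variables (R : comNzRingType) (Q : R -> Prop).
Hypothesis idealQ : is_ideal Q.

Lemma ideal0 : Q 0. Proof. by case: idealQ. Qed.

Lemma idealD {a b} : Q a -> Q b -> Q (a + b).
Proof. by case: idealQ => _ + _; apply. Qed.

Lemma idealMl {r a} : Q a -> Q (r * a).
Proof. by case: idealQ => _ _; apply. Qed.

Lemma idealMr {r a} : Q a -> Q (a * r).
Proof. by rewrite mulrC; apply: idealMl. Qed.

Lemma idealN {a} : Q a -> Q (- a).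
Proof. by rewrite -mulN1r; apply: idealMl. Qed.

Lemma idealB {a b} : Q a -> Q b -> Q (a - b).
Proof. by move=> Qa /idealN; apply: idealD. Qed.

Lemma idealBC {a b} : Q (a - b) -> Q (b - a).
Proof. by move=> /idealN; rewrite opprB. Qed.

Lemma idealB_trans {a b c} : Q (a - b) -> Q (b - c) -> Q (a - c).
Proof. by move=> Qab /(idealD Qab); rewrite addrA subrK. Qed.

Lemma idealXX {a b} m : Q (a - b) -> Q (a ^+ m - b ^+ m).
Proof. by rewrite subrXX; apply: idealMr. Qed.

Lemma ideal_sum (I : Type) (r : seq I) (P : pred I) (F : I -> R) :
  (forall i, P i -> Q (F i)) -> Q (\sum_(i <- r | P i) F i).
Proof. by move=> QF; apply: big_ind => //; [apply: ideal0 | move=> x y; apply: idealD]. Qed.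

Lemma ideal_prodB1 (I : Type) (r : seq I) (P : pred I) (F : I -> R) :
  (forall i, P i -> Q (F i - 1)) -> Q (\prod_(i <- r | P i) F i - 1).
Proof.
move=> QF; apply: (big_ind (fun x => Q (x - 1))) => //; first by rewrite subrr; apply: ideal0.
move=> x y Qx Qy; have := idealD (idealMr (r := y) Qx) Qy.
by rewrite mulrBl mul1r addrA subrK.
Qed.

Definition unit_mod x := exists y, Q (x * y - 1).
Definition nilpotent_mod x := exists m, Q (x ^+ m).
Definition unit_or_nilpotent_mod := forall x, unit_mod x \/ nilpotent_mod x.

Lemma unit_mod1 : unit_mod 1.
Proof. by exists 1; rewrite mulr1 subrr; apply: ideal0. Qed.

Lemma unit_modM x y : unit_mod x -> unit_mod y -> unit_mod (x * y).
Proof.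
move=> [u Qu] [v Qv]; exists (u * v).
have := idealD (idealMr (r := y * v) Qu) Qv.
by rewrite mulrBl mul1r addrA subrK mulrACA.
Qed.

Lemma unit_mod_prod (I : Type) (r : seq I) (P : pred I) (F : I -> R) :
  (forall i, P i -> unit_mod (F i)) -> unit_mod (\prod_(i <- r | P i) F i).
Proof. by move=> UF; apply: big_ind => //; [apply: unit_mod1 | apply: unit_modM]. Qed.

Lemma unit_mod_cancel x z : unit_mod x -> Q (x * z) -> Q z.
Proof.
move=> [y Qy] Qxz; have := idealB (idealMr (r := y) Qxz) (idealMr (r := z) Qy).
by rewrite mulrAC mulrBl mul1r opprB addrC subrK.
Qed.

(* (x - u) * sum_(i < m) x^(m-1-i) u^i = x^m - u^m, and u^m is invertible. *)
Lemma unit_mod_nilpotentB (x u v : R) : nilpotent_mod x -> u * v = 1 -> unit_mod (x - u).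
Proof.
move=> [m Qxm] uv1; exists ((\sum_(i < m) x ^+ (m.-1 - i) * u ^+ i) * - v ^+ m).
rewrite mulrA -subrXX mulrBl !mulrN -[u ^+ m * _]exprMn uv1 expr1n opprK addrK.
exact/idealN/idealMr.
Qed.

End IdealArithmetic.

Lemma primary_unit_or_nilpotent (R : comNzRingType) (Q : R -> Prop) (f : R) a b :
  is_primary Q -> (a < b)%N -> Q (f ^+ a - f ^+ b) -> unit_mod Q f \/ nilpotent_mod Q f.
Proof.
move=> [idealQ _ primQ] lt_ab.
have [d ->] : exists d, b = (a + d.+1)%N by exists (b - a.+1)%N; rewrite -addSnnS subnKC.
rewrite exprD -{1}(mulr1 (f ^+ a)) -mulrBr mulrC => Qfa.
have [Q1f | notQ1f] := classic (Q (1 - f ^+ d.+1)).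
  by left; exists (f ^+ d); rewrite -exprS; apply: idealBC.
by right; have [m Qm] := primQ _ _ Qfa notQ1f; exists (a * m)%N; rewrite exprM.
Qed.

Lemma spanned_powers_collide (F : finFieldType) (R : comAlgType F) (I : R -> Prop)
    (s : seq R) :
  is_ideal I -> (forall f, exists c : 'I_(size s) -> F, I (f - \sum_(k < size s) c k *: s`_k)) ->
  forall f : R, exists a b, (a < b)%N /\ I (f ^+ a - f ^+ b).
Proof.
move=> idealI span f; pose N := #|{ffun 'I_(size s) -> F}|.
have : forall k : 'I_N.+1, exists c : {ffun 'I_(size s) -> F},
    I (f ^+ k - \sum_(j < size s) c j *: s`_j).
  move=> k; have [c Ic] := span (f ^+ k); exists [ffun j => c j].
  by under eq_bigr do rewrite ffunE.
case/fin_all_exists => coord Icoord.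
have : ~~ injectiveb coord.
  by apply/negP => /injectiveP/leq_card; rewrite card_ord ltnn.
case/injectivePn => k1 [k2 neq_k Ecoord].
have Ik : I (f ^+ k1 - f ^+ k2).
  by move: (Icoord k2); rewrite -Ecoord => /(idealBC idealI); apply: idealB_trans (Icoord k1).
have [lt_k | lt_k | /val_inj eq_k] := ltngtP k1 k2.
- by exists k1, k2.
- by exists k2, k1; split => //; apply: idealBC.
- by rewrite eq_k eqxx in neq_k.
Qed.

Lemma expr_card_sub_prod (F : finFieldType) (R : comAlgType F) (f : R) :
  f ^+ #|F| - f = \prod_(a : F) (f - a%:A).
Proof.
have := congr1 (fun p => (map_poly (in_alg R) p).[f]) (finField_genPoly F).
rewrite /= rmorphB /= map_polyXn map_polyX !hornerE => ->.
rewrite rmorph_prod horner_prod.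
by apply: eq_bigr => a _; rewrite rmorphB /= map_polyX map_polyC !hornerE.
Qed.

Lemma frobenius_fixed_mod_const (F : finFieldType) (R : comAlgType F) (Q : R -> Prop) (f : R) :
  is_ideal Q -> ~ Q 1 -> unit_or_nilpotent_mod Q ->
  Q (f ^+ #|F| - f) -> exists a : F, Q (f - a%:A).
Proof.
move=> idealQ notQ1 localQ; rewrite expr_card_sub_prod => Qprod.
(* A nonunit factor f - a is nilpotent, which makes every other factor
   (f - a) - (b - a) a unit; if all factors are units, then Q 1. *)
have [[a nonunit] | units] := classic (exists a : F, ~ unit_mod Q (f - a%:A)).
  have [// | nil_a] := localQ (f - a%:A).
  exists a; apply: (unit_mod_cancel idealQ (x := \prod_(b | b != a) (f - b%:A))).
    apply: (unit_mod_prod idealQ) => b neq_ba.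
    have -> : f - b%:A = (f - a%:A) - (b - a)%:A by rewrite scalerBl opprB addrA subrK.
    apply: (unit_mod_nilpotentB idealQ nil_a (v := (b - a)^-1%:A)).
    by rewrite mulr_algl scalerA mulfV ?subr_eq0 // scale1r.
  by rewrite mulrC; move: Qprod; rewrite (bigD1 a).
have Uprod : unit_mod Q (\prod_(a : F) (f - a%:A)).
  by apply: (unit_mod_prod idealQ) => a _; apply: NNPP => nonunit; apply: units; exists a.
by case: notQ1; apply: (unit_mod_cancel idealQ Uprod (z := 1)); rewrite mulr1.
Qed.

Lemma zero_dimensional_unit_or_nilpotent (F : finFieldType) (R : comAlgType F)
    (I Q : R -> Prop) (s : seq R) :
  is_ideal I -> (forall f, exists c : 'I_(size s) -> F, I (f - \sum_(k < size s) c k *: s`_k)) ->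
  is_primary Q -> (forall f, I f -> Q f) -> unit_or_nilpotent_mod Q.
Proof.
move=> idealI span primQ subIQ g.
have [a [b [lt_ab Iab]]] := spanned_powers_collide idealI span g.
exact: primary_unit_or_nilpotent primQ lt_ab (subIQ _ Iab).
Qed.

Section Comaximal.
Variable R : comNzRingType.

Definition comaximal (A B : R -> Prop) := exists a, A a /\ B (1 - a).

Lemma comaximal_sym A B : comaximal A B -> comaximal B A.
Proof. by move=> [a [Aa B1a]]; exists (1 - a); rewrite subKr. Qed.

Lemma comaximal_of_radical (A B : R -> Prop) g :
  is_ideal A -> is_ideal B -> unit_or_nilpotent_mod B ->
  radical A g -> ~ radical B g -> comaximal A B.
Proof.
move=> idealA idealB localB [m Agm] notBg.
have [[y Bgy] | /notBg //] := localB g.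
exists ((g * y) ^+ m); split; first by rewrite exprMn; apply: idealMr.
by apply: (idealBC idealB); have := idealXX idealB m Bgy; rewrite expr1n.
Qed.

Lemma comaximal_of_radical_neq (A B : R -> Prop) :
  is_ideal A -> is_ideal B -> unit_or_nilpotent_mod A -> unit_or_nilpotent_mod B ->
  (exists g, ~ (radical A g <-> radical B g)) -> comaximal A B.
Proof.
move=> idealA idealB localA localB [g neq_rad].
have [radA | nradA] := classic (radical A g);
  have [radB | nradB] := classic (radical B g); try by case: neq_rad.
- exact: comaximal_of_radical radA nradB.
- exact/comaximal_sym/(comaximal_of_radical _ _ _ radB nradA).
Qed.

Lemma comaximal_crt_basis t (Q : 'I_t -> R -> Prop) :
  (forall i, is_ideal (Q i)) -> (forall i j, i != j -> comaximal (Q i) (Q j)) ->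
  exists h : 'I_t -> R, forall i, Jcomp Q i (h i) /\ Q i (h i - 1).
Proof.
move=> idealQ comaxQ.
suff /fin_all_exists : forall i, exists x, Jcomp Q i x /\ Q i (x - 1) by [].
move=> i; have : forall j, exists b, j != i -> Q j b /\ Q i (1 - b).
  move=> j; have [-> | neq_ji] := eqVneq j i; first by exists 0 => /negP.
  by have [b ?] := comaxQ j i neq_ji; exists b.
case/fin_all_exists => b Hb; exists (\prod_(j | j != i) b j); split.
  by move=> j neq_ji; rewrite (bigD1 j) //=; apply: idealMr; case: (Hb j neq_ji).
by apply: ideal_prodB1 => // j /Hb [_ /(idealBC (idealQ i))].
Qed.

End Comaximal.

Section FrobeniusKernel.
Variables (F : finFieldType) (R : comAlgType F) (t : nat).
Variables (I : R -> Prop) (Q : 'I_t -> R -> Prop) (h : 'I_t -> R).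
Hypothesis I_meet : forall f, I f <-> (forall i, Q i f).
Hypothesis idealQ : forall i, is_ideal (Q i).
Hypothesis properQ : forall i, ~ Q i 1.
Hypothesis h_crt : forall i, Jcomp Q i (h i) /\ Q i (h i - 1).
Arguments idealQ : clear implicits.
Arguments properQ : clear implicits.
Arguments h_crt : clear implicits.

Lemma crt_basis_notin i : ~ Q i (h i).
Proof.
move=> Qh; case: (properQ i).
by have := idealB (idealQ i) Qh (h_crt i).2; rewrite opprB addrC subrK.
Qed.

Lemma crt_basis_idempotent i : I (h i ^+ 2 - h i).
Proof.
apply/I_meet => j; rewrite expr2 -{3}(mulr1 (h i)) -mulrBr.
have [-> | neq_ji] := eqVneq j i; first by apply: (idealMl (idealQ i)); case: (h_crt i).
by apply: (idealMr (idealQ j)); apply: (h_crt i).1.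
Qed.

Lemma crt_basis_comb_mod (c : 'I_t -> F) j :
  Q j (\sum_(i < t) c i *: h i - (c j)%:A).
Proof.
rewrite (bigD1 j) //= addrAC; apply: (idealD (idealQ j)).
  rewrite -[c j *: h j]mulr_algl -[X in _ - X]mulr1 -mulrBr.
  by apply: (idealMl (idealQ j)); case: (h_crt j).
apply: (ideal_sum (idealQ j)) => i neq_ij; rewrite -mulr_algl.
by apply: (idealMl (idealQ j)); apply: (h_crt i).1; rewrite eq_sym.
Qed.

Lemma crt_basis_free (c : 'I_t -> F) :
  I (\sum_(i < t) c i *: h i) -> forall i, c i = 0.
Proof.
move=> /I_meet Icomb i; apply/eqP/contraT => nz_ci; case: (properQ i).
have Qci : Q i (c i)%:A.
  by have := idealB (idealQ i) (Icomb i) (crt_basis_comb_mod c i); rewrite opprB addrC subrK.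
by have := idealMl (idealQ i) (r := (c i)^-1%:A) Qci; rewrite mulr_algl scalerA mulVf // scale1r.
Qed.

Lemma crt_basis_comb_fixed (c : 'I_t -> F) f :
  I (f - \sum_(i < t) c i *: h i) -> I (f ^+ #|F| - f).
Proof.
move=> /I_meet Idiff; apply/I_meet => j.
have Qfc := idealB_trans (idealQ j) (Idiff j) (crt_basis_comb_mod c j).
have := idealXX (idealQ j) #|F| Qfc; rewrite exprZn expr1n expf_card => Qfq.
by have := idealB (idealQ j) Qfq Qfc; rewrite opprB addrA subrK.
Qed.

Hypothesis localQ : forall i, unit_or_nilpotent_mod (Q i).

Lemma fixed_crt_basis_comb f :
  I (f ^+ #|F| - f) -> exists c : 'I_t -> F, I (f - \sum_(i < t) c i *: h i).
Proof.
move=> /I_meet Ifix.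
have /fin_all_exists [c Qc] : forall j, exists a : F, Q j (f - a%:A).
  by move=> j; apply: frobenius_fixed_mod_const.
exists c; apply/I_meet => j.
apply: (idealB_trans (idealQ j) (Qc j)); apply: (idealBC (idealQ j)).
exact: crt_basis_comb_mod.
Qed.

End FrobeniusKernel.

Theorem theorem3 (F : finFieldType) (n t : nat)
    (I : {mpoly F[n]} -> Prop) (Q : 'I_t -> {mpoly F[n]} -> Prop) :
  is_ideal I ->
  zero_dimensional I ->
  irredundant_primary_decomposition I Q ->
  exists h : 'I_t -> {mpoly F[n]},
    [/\ forall i, Jcomp Q i (h i) /\ ~ Q i (h i),
        forall i, I ((h i) ^+ 2 - h i),
        forall f : {mpoly F[n]}, I (f ^+ #|F| - f) <->
          exists c : 'I_t -> F, I (f - \sum_(i < t) c i *: h i)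
      & forall c : 'I_t -> F, I (\sum_(i < t) c i *: h i) -> forall i, c i = 0].
Proof.
move=> idealI [s span] [I_meet primQ radQ _].
have idealQ i : is_ideal (Q i) by case: (primQ i).
have properQ i : ~ Q i 1 by case: (primQ i).
have localQ i : unit_or_nilpotent_mod (Q i).
  by apply: zero_dimensional_unit_or_nilpotent idealI span (primQ i) _ => f /I_meet.
have [h h_crt] : exists h, forall i, Jcomp Q i (h i) /\ Q i (h i - 1).
  apply: (comaximal_crt_basis idealQ) => i j neq_ij.
  exact: comaximal_of_radical_neq (idealQ i) (idealQ j) (localQ i) (localQ j) (radQ i j neq_ij).
exists h; split.
- by move=> i; split; [case: (h_crt i) | apply: (crt_basis_notin idealQ properQ h_crt)].
- exact: (crt_basis_idempotent I_meet idealQ h_crt).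
- move=> f; split; first exact: (fixed_crt_basis_comb I_meet idealQ properQ h_crt localQ).
  by case=> c; apply: (crt_basis_comb_fixed I_meet idealQ h_crt).
- exact: (crt_basis_free I_meet idealQ properQ h_crt).
Qed.
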